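(* Let $m\in\mathbb Z_+$ and let $J_1\sqcup\cdots\sqcup J_\ell$ be a partition of $[m]$ such that each $J_k$ is a set of contiguous integers and every element of $J_k$ precedes every element of $J_{k+1}$. Let $a_k=\min J_k$, $b_k=\max J_k$, $m_k=|J_k|$. Let $A\in[0,1]^{n\times m}$ have non-decreasing rows and non-decreasing columns, and suppose $\sum_{i=1}^n(A_{i,b_k}-A_{i,a_k})\le\chi$ for each $k\in[\ell]$ and some $\chi\ge0$. Suppose further that there are positive reals $\rho,\rho_1,\dots,\rho_\ell$ and a permutation $\pi$ of $[n]$ such that for every $i\in[n]$: (i) $\sum_{j=1}^m|A_{\pi(i),j}-A_{i,j}|\le\rho$, and (ii) $\sum_{j\in J_k}|A_{\pi(i),j}-A_{i,j}|\le\rho_k$ for each $k\in[\ell]$. Then \[ \sum_{i=1}^n\sum_{j=1}^m(A_{\pi(i),j}-A_{i,j})^2\le2\chi\sum_{k=1}^\ell\rho_k+n\rho\max_{k\in[\ell]}\frac{\rho_k}{m_k}. \] *)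

From mathcomp Require Import all_boot all_order all_algebra all_fingroup.
Set Implicit Arguments. Unset Strict Implicit. Unset Printing Implicit Defensive.
Import Order.TTheory GRing.Theory Num.Theory.
Local Open Scope ring_scope.

Definition entry (R : ringType) (n m : nat) (A : 'M[R]_(n, m)) (i : 'I_n) (j : nat) : R :=
  match insub j with Some j' => A i j' | None => 0 end.

(* Block k (0-based) is J_k = {c k, ..., c (k+1) - 1} (0-based columns). *)
Definition in_block (c : nat -> nat) (k j : nat) : bool := (c k <= j < c k.+1)%N.

From mathcomp Require Import all_boot all_order all_algebra all_fingroup.
From mathcomp Require Import zify lra.
Set Implicit Arguments. Unset Strict Implicit. Unset Printing Implicit Defensive.
Import Order.TTheory GRing.Theory Num.Theory.
Local Open Scope ring_scope.

(* Write d_ij = A_(pi i, j) - A_ij and let w_ik be the sum of the variations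
   A_(r, b_k) - A_(r, a_k) of the rows r = i and r = pi i over the block J_k.
   Rows are nondecreasing, so for j, j' in J_k we get |d_ij| <= |d_ij'| + w_ik;
   averaging over j' gives |d_ij| <= rho_k / m_k + w_ik <= M + w_ik, where M is
   the maximum of the rho_k / m_k. Hence d_ij^2 <= (M + w_ik) |d_ij|, and
   summing over J_k, then over k, bounds row i by M rho + sum_k rho_k w_ik.
   Finally, pi being a permutation, sum_i w_ik = 2 sum_i (A_(i, b_k) - A_(i, a_k))
   <= 2 chi. *)

Lemma homo_leq_prefix (l : nat) (c : nat -> nat) :
  (forall k, (k < l)%N -> (c k <= c k.+1)%N) ->
  {in [pred k | (k <= l)%N] &, {homo c : i j / (i <= j)%N}}.
Proof.
move=> c_homo; apply: homo_leq_in => //.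
- by move=> ? ? ?; apply: leq_trans.
- by move=> i j _ /= j_le k /andP[_ /ltnW/leq_trans]; apply.
- by move=> i _; apply: c_homo.
Qed.

Lemma sum_nat_blocks (V : nmodType) (l : nat) (c : nat -> nat) (F : nat -> V) :
  (forall k, (k < l)%N -> (c k <= c k.+1)%N) ->
  \sum_(c 0 <= j < c l) F j = \sum_(k < l) \sum_(c k <= j < c k.+1) F j.
Proof.
elim: l => [|l IHl] c_homo; first by rewrite big_ord0 big_geq.
rewrite big_ord_recr -IHl => [|k /ltnW]; last exact: c_homo.
rewrite (@big_cat_nat _ _ _ (c l)) ?c_homo //.
by apply: (homo_leq_prefix c_homo); rewrite ?inE.
Qed.

Lemma sum_ord_in_range (V : nmodType) (m a b : nat) (F : nat -> V) : (b <= m)%N ->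
  \sum_(j < m | (a <= j < b)%N) F j = \sum_(a <= j < b) F j.
Proof.
move=> le_bm; rewrite big_geq_mkord (big_ord_widen_cond _ _ _ le_bm).
by apply: eq_bigl => j; rewrite andbC.
Qed.

Lemma entry_ord (R : nzRingType) n m (A : 'M[R]_(n, m)) i (j : 'I_m) : entry A i j = A i j.
Proof. by rewrite /entry valK. Qed.

Section RealInequalities.
Variable R : realFieldType.

Lemma ler_dist_itv (a b a' b' x x' y y' : R) :
  a <= x <= b -> a <= x' <= b -> a' <= y <= b' -> a' <= y' <= b' ->
  `|y - x| <= `|y' - x'| + ((b - a) + (b' - a')).
Proof.
move=> /andP[? ?] /andP[? ?] /andP[? ?] /andP[? ?].
have := ler_norm (y' - x'); have := ler_norm (- (y' - x')); rewrite normrN => ? ?.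
by rewrite ler_norml; apply/andP; split; lra.
Qed.

Lemma ler_mean_add (a b : nat) (f : nat -> R) (x s w : R) : (a < b)%N ->
  (forall j, (a <= j < b)%N -> x <= f j + w) -> \sum_(a <= j < b) f j <= s ->
  x <= s / (b - a)%:R + w.
Proof.
move=> lt_ab x_le sum_le; have len_gt0 : 0 < (b - a)%:R :> R by rewrite ltr0n subn_gt0.
have : x * (b - a)%:R <= s + w * (b - a)%:R.
  rewrite !mulr_natr -!sumr_const_nat.
  apply: le_trans (_ : \sum_(a <= j < b) (f j + w) <= _); first exact: ler_sum_nat.
  by rewrite big_split lerD2r.
by rewrite -ler_pdivlMr // mulrDl mulfK ?gt_eqF.
Qed.

Lemma sum_sqr_le_norm (I : eqType) (r : seq I) (x : I -> R) (M w s : R) :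
  0 <= w -> {in r, forall i, `|x i| <= M + w} -> \sum_(i <- r) `|x i| <= s ->
  \sum_(i <- r) x i ^+ 2 <= M * \sum_(i <- r) `|x i| + s * w.
Proof.
move=> w_ge0 x_le sum_le.
apply: le_trans (_ : \sum_(i <- r) (M * `|x i| + w * `|x i|) <= _).
  rewrite big_seq [X in _ <= X]big_seq; apply: ler_sum => i /x_le x_le_i.
  by rewrite -real_normK ?num_real // expr2 -mulrDl ler_wpM2r.
by rewrite big_split -!mulr_sumr /= lerD2l mulrC ler_wpM2r.
Qed.

End RealInequalities.

Section PermutedRows.
Variables (R : realFieldType) (n m l : nat) (c : nat -> nat).
Variables (A : 'M[R]_(n, m)) (pi : 'S_n) (chi rho : R) (rhok : nat -> R).

Hypothesis c0 : c 0%N = 0%N.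
Hypothesis cl : c l = m.
Hypothesis c_incr : forall k, (k < l)%N -> (c k < c k.+1)%N.
Hypothesis A_row_homo : forall i (j j' : 'I_m), (j <= j')%N -> A i j <= A i j'.
Hypothesis block_var_sum_le : forall k, (k < l)%N ->
  \sum_(i < n) (entry A i (c k.+1).-1 - entry A i (c k)) <= chi.
Hypothesis rhok_gt0 : forall k, (k < l)%N -> 0 < rhok k.
Hypothesis dev_row_le : forall i : 'I_n, \sum_(j < m) `|A (pi i) j - A i j| <= rho.
Hypothesis dev_block_le : forall (i : 'I_n) k, (k < l)%N ->
  \sum_(j < m | in_block c k j) `|A (pi i) j - A i j| <= rhok k.

Definition dev (i : 'I_n) (j : nat) : R := entry A (pi i) j - entry A i j.

Definition block_var (r : 'I_n) (k : nat) : R := entry A r (c k.+1).-1 - entry A r (c k).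

Definition pair_var (i : 'I_n) (k : nat) : R := block_var i k + block_var (pi i) k.

Definition max_block_mean : R := \big[Num.max/0]_(k < l) (rhok k / (c k.+1 - c k)%:R).

Let c_homo k (lt_kl : (k < l)%N) : (c k <= c k.+1)%N := ltnW (c_incr lt_kl).

Lemma block_le_m k : (k < l)%N -> (c k.+1 <= m)%N.
Proof. by move=> lt_kl; rewrite -cl (homo_leq_prefix c_homo) ?inE. Qed.

Lemma entry_row_homo r j j' : (j <= j')%N -> (j' < m)%N -> entry A r j <= entry A r j'.
Proof.
move=> le_jj' lt_j'm; have lt_jm := leq_ltn_trans le_jj' lt_j'm.
by rewrite -[j]/(val (Ordinal lt_jm)) -[j']/(val (Ordinal lt_j'm)) !entry_ord A_row_homo.
Qed.

Lemma entry_in_block r k j : (k < l)%N -> in_block c k j ->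
  entry A r (c k) <= entry A r j <= entry A r (c k.+1).-1.
Proof.
move=> lt_kl /andP[le_ckj lt_j]; have le_m := block_le_m lt_kl.
by rewrite !entry_row_homo //; lia.
Qed.

Lemma pair_var_ge0 i k : (k < l)%N -> 0 <= pair_var i k.
Proof.
move=> lt_kl; have lt_c := c_incr lt_kl; have le_m := block_le_m lt_kl.
by rewrite addr_ge0 // subr_ge0 entry_row_homo //; lia.
Qed.

Lemma sum_dev_le i : \sum_(j < m) `|dev i j| <= rho.
Proof. by under eq_bigr do rewrite /dev !entry_ord; apply: dev_row_le. Qed.

Lemma sum_block_dev_le i k : (k < l)%N -> \sum_(c k <= j < c k.+1) `|dev i j| <= rhok k.
Proof.
move=> lt_kl; rewrite -(@sum_ord_in_range _ m) ?block_le_m //.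
by under eq_bigr do rewrite /dev !entry_ord; apply: dev_block_le.
Qed.

Lemma dev_le_mean i k j : (k < l)%N -> in_block c k j ->
  `|dev i j| <= rhok k / (c k.+1 - c k)%:R + pair_var i k.
Proof.
move=> lt_kl j_in; apply: ler_mean_add (c_incr lt_kl) _ (sum_block_dev_le i lt_kl).
move=> j' j'_in; apply: ler_dist_itv; exact: entry_in_block.
Qed.

Lemma max_block_mean_ge0 : 0 <= max_block_mean.
Proof. exact: bigmax_ge_id. Qed.

Lemma sum_sqr_dev_block i k : (k < l)%N ->
  \sum_(c k <= j < c k.+1) dev i j ^+ 2
    <= max_block_mean * \sum_(c k <= j < c k.+1) `|dev i j| + rhok k * pair_var i k.
Proof.
move=> lt_kl; apply: sum_sqr_le_norm (pair_var_ge0 i lt_kl) _ (sum_block_dev_le i lt_kl).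
move=> j; rewrite mem_index_iota => /(dev_le_mean i lt_kl) /le_trans; apply.
by rewrite lerD2r (le_bigmax 0 (fun k : 'I_l => rhok k / (c k.+1 - c k)%:R) (Ordinal lt_kl)).
Qed.

Lemma sum_sqr_dev_row i :
  \sum_(j < m) (A (pi i) j - A i j) ^+ 2
    <= max_block_mean * rho + \sum_(k < l) rhok k * pair_var i k.
Proof.
have blocks (F : nat -> R) : \sum_(j < m) F j = \sum_(k < l) \sum_(c k <= j < c k.+1) F j.
  by rewrite -(big_mkord xpredT) -c0 -cl sum_nat_blocks.
rewrite (eq_bigr (fun j : 'I_m => dev i j ^+ 2)) => [|j _]; last by rewrite /dev !entry_ord.
rewrite (blocks (fun j => dev i j ^+ 2)).
apply: le_trans (ler_sum _ (fun k _ => sum_sqr_dev_block i (ltn_ord k))) _.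
rewrite big_split /= -mulr_sumr -(blocks (fun j => `|dev i j|)) lerD2r.
by rewrite ler_wpM2l ?max_block_mean_ge0 ?sum_dev_le.
Qed.

Lemma sum_pair_var_le k : (k < l)%N -> \sum_(i < n) pair_var i k <= 2 * chi.
Proof.
move=> lt_kl; rewrite big_split /=.
have -> : \sum_(i < n) block_var (pi i) k = \sum_(i < n) block_var i k.
  by rewrite [RHS](reindex_perm pi).
by rewrite -mulr2n -[_ *+ 2]mulr_natl ler_wpM2l // block_var_sum_le.
Qed.

Lemma sum_sqr_dev_le :
  \sum_(i < n) \sum_(j < m) (A (pi i) j - A i j) ^+ 2
    <= 2 * chi * (\sum_(k < l) rhok k) + n%:R * rho * max_block_mean.
Proof.
apply: le_trans (ler_sum _ (fun i _ => sum_sqr_dev_row i)) _.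
rewrite big_split /= sumr_const card_ord exchange_big /= addrC.
apply: lerD; last by rewrite -mulrA mulr_natl [rho * _]mulrC.
rewrite mulr_sumr; apply: ler_sum => k _.
by rewrite -mulr_sumr mulrC ler_wpM2r ?sum_pair_var_le // ltW // rhok_gt0.
Qed.

End PermutedRows.

Theorem lemma12 (R : realFieldType) (n m l : nat) (c : nat -> nat)
  (A : 'M[R]_(n, m)) (chi rho : R) (rhok : nat -> R) (pi : 'S_n) :
  (0 < m)%N ->
  c 0%N = 0%N -> c l = m ->
  (forall k, (k < l)%N -> (c k < c k.+1)%N) ->
  (forall i j, A i j \in `[0, 1]) ->
  (forall i (j j' : 'I_m), (j <= j')%N -> A i j <= A i j') ->
  (forall (i i' : 'I_n) j, (i <= i')%N -> A i j <= A i' j) ->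
  0 <= chi ->
  (forall k, (k < l)%N ->
     \sum_(i < n) (entry A i (c k.+1).-1 - entry A i (c k)) <= chi) ->
  0 < rho -> (forall k, (k < l)%N -> 0 < rhok k) ->
  (forall i : 'I_n, \sum_(j < m) `|A (pi i) j - A i j| <= rho) ->
  (forall (i : 'I_n) k, (k < l)%N ->
     \sum_(j < m | in_block c k j) `|A (pi i) j - A i j| <= rhok k) ->
  \sum_(i < n) \sum_(j < m) (A (pi i) j - A i j) ^+ 2
    <= 2 * chi * (\sum_(k < l) rhok k)
       + n%:R * rho * \big[Num.max/0]_(k < l) (rhok k / (c k.+1 - c k)%:R).
Proof.
move=> _ c0 cl c_incr _ A_row_homo _ _ block_var_sum_le _ rhok_gt0 dev_row_le dev_block_le.
exact: sum_sqr_dev_le.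
Qed.
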